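(* There are infinitely many odd integers $n$ such that $\varphi(2^n-1)/(2^n-1)>1/3$, where $\varphi$ is Euler's totient function. *)

From mathcomp Require Import all_boot.

From mathcomp Require Import all_boot cyclic zify.

Set Implicit Arguments.
Unset Strict Implicit.

(* Every prime factor q of 2^p - 1 (p prime) satisfies p | q - 1, hence q > p.
   So 2^p - 1 has k < p/2 distinct prime factors (each is at least 4), and
   phi(2^p - 1)/(2^p - 1) = prod (1 - 1/q) >= 1 - k/p > 1/2. *)

Lemma expn_gcdn_mod1 a m n d : 0 < m ->
  a ^ m = 1 %[mod d] -> a ^ n = 1 %[mod d] -> a ^ gcdn m n = 1 %[mod d].
Proof.
move=> m_gt0 am1 an1.
have powM1 k e : a ^ e = 1 %[mod d] -> a ^ (k * e) = 1 %[mod d].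
  by move=> ae1; rewrite mulnC expnM -modnXm ae1 modnXm exp1n.
have [km kn def_km _] := egcdnP n m_gt0.
by rewrite -(powM1 km m am1) def_km expnD -modnMml (powM1 kn n an1) modnMml mul1n.
Qed.

Lemma mersenne_prime_divisor p q : prime p -> prime q ->
  q %| 2 ^ p - 1 -> p %| q.-1.
Proof.
move=> p_pr q_pr q_dvd.
have two_p : 2 ^ p = 1 %[mod q] by apply/eqP; rewrite eqn_mod_dvd ?expn_gt0.
have odd_m : odd (2 ^ p - 1).
  by rewrite oddB ?expn_gt0 // oddX /= orbF addbT -lt0n prime_gt0.
have cop2q : coprime 2 q.
  rewrite prime_coprime //; apply: contraL odd_m => /dvdn_trans/(_ q_dvd).
  by rewrite dvdn2.
have two_q : 2 ^ q.-1 = 1 %[mod q] by rewrite -totient_prime ?Euler_exp_totient.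
(* Otherwise gcdn p q.-1 = 1, and 2 = 1 %[mod q] would force q = 1. *)
have [//|p_ndvd] := boolP (p %| q.-1).
have := expn_gcdn_mod1 (prime_gt0 p_pr) two_p two_q.
rewrite (eqP (_ : coprime p q.-1)) ?prime_coprime // => /eqP.
by rewrite eqn_mod_dvd // dvdn1 => /eqP q1; rewrite q1 in q_pr.
Qed.

Lemma mersenne_primes_gt p q : prime p -> q \in primes (2 ^ p - 1) -> p < q.
Proof.
rewrite mem_primes => p_pr /and3P[q_pr _ q_dvd].
have q_gt1 := prime_gt1 q_pr.
have := dvdn_leq _ (mersenne_prime_divisor p_pr q_pr q_dvd); lia.
Qed.

Lemma prod_primes_logn m : 0 < m -> m = \prod_(q <- primes m) q ^ logn q m.
Proof. by move/prod_prime_decomp; rewrite prime_decompE big_map. Qed.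

Lemma leq_expn_size_primes b m : 0 < m -> {in primes m, forall q, b <= q} ->
  b ^ size (primes m) <= m.
Proof.
move=> m_gt0 b_le; rewrite [leqRHS]prod_primes_logn //.
rewrite -(count_predT (primes m)) -iter_muln_1 -big_const_seq !big_seq.
apply: leq_prod => q q_m; apply: leq_trans (b_le q q_m) _.
rewrite -{1}[q]expn1 leq_pexp2l ?logn_gt0 //.
by move: q_m; rewrite mem_primes => /andP[/prime_gt0].
Qed.

(* The Weierstrass product inequality prod (1 - 1/q) >= 1 - sum 1/q, with
   every 1/q bounded by 1/a, cleared of denominators. *)
Lemma weierstrass_prod_predn a s : all (fun q => a < q) s ->
  \prod_(q <- s) q * (a - size s) <= a * \prod_(q <- s) q.-1.
Proof.
elim: s => [|q s IHs] /=; first by rewrite !big_nil mul1n muln1 subn0.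
case/andP => a_lt_q /IHs; rewrite !big_cons.
set P := \prod_(j <- s) j; set P' := \prod_(j <- s) j.-1 => IH.
have step : q * (a - (size s).+1) <= q.-1 * (a - size s) by nia.
apply: (@leq_trans (q.-1 * (P * (a - size s)))).
  by rewrite -mulnA mulnCA [leqRHS]mulnCA leq_mul2l step orbT.
by rewrite [leqRHS]mulnCA leq_mul2l IH orbT.
Qed.

Lemma totient_lower_bound a m : 0 < m -> {in primes m, forall q, a < q} ->
  m * (a - size (primes m)) <= a * totient m.
Proof.
move=> m_gt0 a_lt; set R := \prod_(q <- primes m) q ^ (logn q m).-1.
have def_m : m = \prod_(q <- primes m) q * R.
  rewrite {1}(prod_primes_logn m_gt0) -big_split /= !big_seq.
  by apply: eq_bigr => q q_m; rewrite -expnS prednK ?logn_gt0.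
have def_phi : totient m = \prod_(q <- primes m) q.-1 * R.
  by rewrite totientE // big_split.
have rad_bound := weierstrass_prod_predn (introT allP a_lt).
by rewrite def_phi {1}def_m mulnAC mulnA leq_mul2r rad_bound orbT.
Qed.

Theorem lemma5p2 :
  forall N : nat, exists n : nat,
    N < n /\ odd n /\ 2 ^ n - 1 < 3 * totient (2 ^ n - 1).
Proof.
move=> N; have [p ltNp p_pr] := prime_above (N + 3).
exists p; split; first lia; split.
  by case: (even_prime p_pr) => // p2; lia.
set m := 2 ^ p - 1.
have m_lt : m < 2 ^ p by rewrite /m subn1 prednK ?expn_gt0.
have m_gt0 : 0 < m by rewrite /m subn_gt0 -{1}(expn0 2) ltn_exp2l //; lia.
have gt_p : {in primes m, forall q, p < q} := fun q => mersenne_primes_gt p_pr.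
have few_primes : 2 * size (primes m) < p.
  rewrite -(ltn_exp2l _ _ (isT : 1 < 2)) expnM.
  apply: leq_ltn_trans m_lt; apply: leq_expn_size_primes => // q /gt_p; lia.
have := totient_lower_bound m_gt0 gt_p; nia.
Qed.
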